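(* Let $U(0)\geqslant 1$ and $d\geqslant 1$ be integers, $U(n)=U(0)+nd$, and let $S(n)=\overline{U(0)U(1)\cdots U(n)}$ (right-concatenation), so $S(0)=U(0)$. Let $n\geqslant 0$ and put $$l=\left\lceil \log_{10}(n d + S(0) + 1)\right\rceil,\qquad t_l=\left\lfloor \frac{10^{l-1}-S(0)}{d}\right\rfloor .$$ Assume $t_l\geqslant 0$ and $U(t_l+2)<10^l$. Let $s_0=S(t_l)$, $s_1=S(t_l+1)$, $s_2=S(t_l+2)$ and $$\alpha_l=-\frac{(10^l-1)\,U(t_l)+d\cdot 10^l}{(10^l-1)^2},\qquad \mu_l=-\frac{d}{10^l-1},\qquad \theta_l=\frac{s_2-2 s_1+s_0}{(10^l-1)^2}.$$ Then $$S(n)=\alpha_l+\mu_l\,(n-t_l)+\theta_l\, 10^{l(n-t_l)}.$$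
   Context: For positive integers $a_0,\ldots,a_k$, $\overline{a_0a_1\cdots a_k}$ denotes the integer whose decimal expansion is the decimal expansion of $a_0$ followed by that of $a_1$, ..., followed by that of $a_k$. Note $l$ is the number of decimal digits of $U(n)$. *)

From mathcomp Require Import all_boot all_order all_algebra.
Set Implicit Arguments. Unset Strict Implicit. Unset Printing Implicit Defensive.

Definition ndigits (b : nat) : nat := (trunc_log 10 b).+1.

Definition dconcat (a b : nat) : nat := a * 10 ^ ndigits b + b.

Definition U (U0 d n : nat) : nat := U0 + n * d.

Fixpoint Sc (U0 d n : nat) : nat :=
  match n with
  | 0 => U0
  | k.+1 => dconcat (Sc U0 d k) (U U0 d k.+1)
  end.

(* By the choice of l and t_l, U(t_l) <= 10^(l-1) < U(t_l + 1) and U(n) < 10^l,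
   so every U(m) with t_l < m <= max(n, t_l + 2) has exactly l digits.  On this
   block concatenation is the affine recurrence
   x_{j+1} = 10^l x_j + U(t_l) + (j+1) d  for x_j = S(t_l + j),
   of which alpha_l + mu_l j is a particular solution; the deviation from it is
   geometric, c 10^(l j).  As the affine part has zero second difference,
   x_2 - 2 x_1 + x_0 = (10^l - 1)^2 c, so c = theta_l. *)
From mathcomp Require Import all_boot all_order all_algebra.
From mathcomp Require Import zify ring.
Set Implicit Arguments. Unset Strict Implicit. Unset Printing Implicit Defensive.
Import Order.TTheory GRing.Theory Num.Theory.
Local Open Scope ring_scope.

Section AffineRecurrence.
Variables (F : fieldType) (L u d : F).
Hypothesis L_neq1 : L != 1.

Definition rec_intercept : F := - (((L - 1) * u + d * L) / (L - 1) ^+ 2).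
Definition rec_slope : F := - (d / (L - 1)).

Let L1_neq0 : L - 1 != 0. Proof. by rewrite subr_eq0. Qed.

Lemma rec_affine_solution j :
  rec_intercept + rec_slope * j.+1%:R
  = L * (rec_intercept + rec_slope * j%:R) + (u + j.+1%:R * d).
Proof. rewrite /rec_intercept /rec_slope -natr1; field; exact: L1_neq0. Qed.

Variables (x : nat -> F) (N : nat).
Hypothesis x_rec : forall j, (j < N)%N -> x j.+1 = L * x j + (u + j.+1%:R * d).

Lemma rec_deviation_geometric j : (j <= N)%N ->
  x j - (rec_intercept + rec_slope * j%:R) = L ^+ j * (x 0 - rec_intercept).
Proof.
elim: j => [|j IH] le_jN; first by rewrite mulr0 addr0 expr0 mul1r.
by rewrite x_rec // rec_affine_solution exprS -mulrA -IH 1?ltnW //; ring.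
Qed.

Lemma rec_closed_form j : (2 <= N)%N -> (j <= N)%N ->
  x j = rec_intercept + rec_slope * j%:R
        + (x 2 - 2 * x 1 + x 0) / (L - 1) ^+ 2 * L ^+ j.
Proof.
move=> N_ge2 le_jN.
have xE k : (k <= N)%N ->
    x k = rec_intercept + rec_slope * k%:R + L ^+ k * (x 0 - rec_intercept).
  by move=> le_kN; rewrite -rec_deviation_geometric // subrKC.
rewrite (xE j) // (xE 2%N) // (xE 1%N) 1?ltnW //.
rewrite /rec_intercept /rec_slope; field; exact: L1_neq0.
Qed.

End AffineRecurrence.

Lemma leq_U U0 d m m' : (0 < d)%N -> (U U0 d m <= U U0 d m')%N = (m <= m')%N.
Proof. by move=> d_gt0; rewrite /U leq_add2l leq_pmul2r. Qed.

Lemma natr_U (R : pzSemiRingType) U0 d t j :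
  (U U0 d (t + j))%:R = (U U0 d t)%:R + j%:R * d%:R :> R.
Proof. by rewrite -natrM -natrD /U mulnDl addnA. Qed.

Lemma up_log_succ_bounds p m : (1 < p)%N -> (0 < m)%N ->
  let k := up_log p m.+1 in [/\ 0 < k, p ^ k.-1 <= m & m < p ^ k]%N.
Proof.
move=> p_gt1 m_gt0 k; have /andP[lo hi] := up_log_bounds p_gt1 (m_gt0 : 1 < m.+1)%N.
by split; rewrite // up_log_gt0 p_gt1.
Qed.

Lemma progression_floor_bounds U0 d t b : (0 < d)%N ->
  (t%:Z = (b%:Z - U0%:Z) %/ d%:Z)%Z -> (U U0 d t <= b < U U0 d t.+1)%N.
Proof.
move=> d_gt0 ht.
have := lez_floor (b%:Z - U0%:Z) (_ : d%:Z != 0); rewrite -ht eqz_nat -lt0n.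
have := ltz_ceil (b%:Z - U0%:Z) (_ : 0 < d%:Z); rewrite -ht ltz_nat.
rewrite /U; nia.
Qed.

Lemma Sc_succ U0 d m l : (0 < l)%N -> (10 ^ l.-1 <= U U0 d m.+1 < 10 ^ l)%N ->
  Sc U0 d m.+1 = (Sc U0 d m * 10 ^ l + U U0 d m.+1)%N.
Proof.
by case: l => // k _ digits_k; rewrite /= /dconcat /ndigits (trunc_log_eq _ digits_k).
Qed.

Theorem theorem1 (U0 d n l tl : nat)
  (hU0 : (1 <= U0)%N) (hd : (1 <= d)%N)
  (hl : l = up_log 10 (n * d + U0 + 1))
  (htl : (tl%:Z = ((10 ^ (l - 1))%:Z - U0%:Z) %/ d%:Z)%Z)
  (hU : (U U0 d (tl + 2) < 10 ^ l)%N) :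
  let s0 : rat := (Sc U0 d tl)%:R in
  let s1 : rat := (Sc U0 d (tl + 1))%:R in
  let s2 : rat := (Sc U0 d (tl + 2))%:R in
  let L : rat := (10 ^ l)%:R in
  let alpha : rat := - (((L - 1) * (U U0 d tl)%:R + d%:R * L) / (L - 1) ^+ 2) in
  let mu : rat := - (d%:R / (L - 1)) in
  let theta : rat := (s2 - 2 * s1 + s0) / (L - 1) ^+ 2 in
  (Sc U0 d n)%:R = alpha + mu * (n%:R - tl%:R)
                  + theta * (10 : rat) ^ ((l%:Z) * (n%:Z - tl%:Z))%R.
Proof.
move=> s0 s1 s2 L alpha mu theta.
have [l_gt0 Un_lo Un_hi] : [/\ 0 < l, 10 ^ l.-1 <= U U0 d n & U U0 d n < 10 ^ l]%N.
  by rewrite hl addn1 addnC; apply: up_log_succ_bounds => //; rewrite addn_gt0 hU0.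
rewrite subn1 in htl.
have /andP[Utl_le Utl1_gt] := progression_floor_bounds hd htl.
have tl_le_n : (tl <= n)%N by rewrite -(leq_U U0 _ _ hd) (leq_trans Utl_le).
set N := maxn (n - tl) 2.
have digits_l j : (j < N)%N -> (10 ^ l.-1 <= U U0 d (tl + j.+1) < 10 ^ l)%N.
  move=> lt_jN; apply/andP; split.
    by apply: leq_trans (ltnW Utl1_gt) _; rewrite leq_U // -addSnnS leq_addr.
  case: (ltnP j 2) => [lt_j2 | le2j].
    by apply: leq_ltn_trans hU; rewrite leq_U // leq_add2l.
  by apply: leq_ltn_trans Un_hi; rewrite leq_U //; lia.
have Sc_rec j : (j < N)%N -> (Sc U0 d (tl + j.+1))%:R
    = L * (Sc U0 d (tl + j))%:R + ((U U0 d tl)%:R + j.+1%:R * d%:R) :> rat.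
  move=> lt_jN; have := digits_l j lt_jN; rewrite addnS => /(Sc_succ l_gt0) ->.
  by rewrite natrD natrM mulrC -addnS natr_U.
have L_neq1 : L != 1 by rewrite pnatr_eq1 -(expn0 10) eqn_exp2l // -lt0n.
have := rec_closed_form (x := fun j => (Sc U0 d (tl + j))%:R) L_neq1 Sc_rec
  (leq_maxr _ _) (leq_maxl (n - tl) 2).
rewrite /= subnKC // addn0 => ->.
by rewrite subzn // -PoszM -exprnP exprM natrB // -[10 ^+ l]natrX.
Qed.
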